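(* Let $\theta_T=\sqrt{4T^{-1}\log\mu(V)}$. For any nonempty starting set $S_0\subseteq V$, any integer $T\geq 1$ and any constant $c>0$, the volume-biased evolving set process $(S_t)$ started from $S_0$ satisfies \[ \widehat{\mathbf P}_{S_0}\Big[\min_{0\le j<T}\phi(S_j)\leq \sqrt{c}\,\theta_T\Big] \geq 1-\frac1c. \]
   Context: Let $G=(V,E)$ be a finite simple undirected graph in which every vertex has positive degree $d(x)$. For $S\subseteq V$, $\mu(S)=\sum_{x\in S}d(x)$, $\partial(S)$ is the number of edges with exactly one endpoint in $S$, and $\phi(S)=\partial(S)/\mu(S)$. $\log$ is the natural logarithm. The lazy random walk has transition kernel $p(x,y)=1/(2d(x))$ if $\{x,y\}\in E$, $p(x,x)=1/2$, and $0$ otherwise; $p(x,S)=\sum_{y\in S}p(x,y)$. The evolving set process (ESP): from state $S$, pick $U$ uniform on $[0,1]$ and move to $\{y: p(y,S)\geq U\}$; $K(S,S')$ denotes its transition kernel. The volume-biased ESP is the Markov chain on nonempty subsets with kernel $\widehat K(S,S')=\frac{\mu(S')}{\mu(S)}K(S,S')$; $\widehat{\mathbf P}_{S_0}$ denotes its law started at $S_0$. *)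

From mathcomp Require Import all_boot.
From Stdlib Require Import Reals.

Set Implicit Arguments.
Unset Strict Implicit.
Unset Printing Implicit Defensive.

Local Open Scope R_scope.

Definition Rleb (x y : R) : bool := if Rle_dec x y then true else false.

(* Graph: simple undirected graph = symmetric irreflexive relation e on a finType V *)
Definition deg (V : finType) (e : rel V) (x : V) : nat := #|[set y | e x y]|.

Definition vol (V : finType) (e : rel V) (S : {set V}) : R :=
  \big[Rplus/0]_(x in S) INR (deg e x).

(* boundary: number of edges with exactly one endpoint in S
   (each such edge {x,y} counted once, oriented with x in S, y not in S) *)
Definition bdry (V : finType) (e : rel V) (S : {set V}) : R :=
  INR #|[set p : V * V | [&& e p.1 p.2, p.1 \in S & p.2 \notin S]]|.

Definition cond (V : finType) (e : rel V) (S : {set V}) : R :=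
  bdry e S / vol e S.

Definition ptrans (V : finType) (e : rel V) (x y : V) : R :=
  if x == y then / 2
  else if e x y then / (2 * INR (deg e x)) else 0.

Definition pS (V : finType) (e : rel V) (x : V) (S : {set V}) : R :=
  \big[Rplus/0]_(y in S) ptrans e x y.

(* One step of the ESP given the uniform variable U *)
Definition esp_step (V : finType) (e : rel V) (S : {set V}) (U : R) : {set V} :=
  [set y | Rleb U (pS e y S)].

(* K(S,S') = Lebesgue measure of {U in [0,1] : esp_step S U = S'}.
   esp_step S U = S' iff  max_{y notin S'} p(y,S) < U <= min_{y in S'} p(y,S),
   so the measure is max(0, min(1, min_{S'} p) - max(0, max_{not S'} p)). *)
Definition esp_K (V : finType) (e : rel V) (S S' : {set V}) : R :=
  Rmax 0 (\big[Rmin/1]_(y in S') pS e y S - \big[Rmax/0]_(y in ~: S') pS e y S).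

Definition esp_Khat (V : finType) (e : rel V) (S S' : {set V}) : R :=
  vol e S' / vol e S * esp_K e S S'.

(* Law of the first n states (S_0, ..., S_{n-1}) of the volume-biased ESP
   started at S0: probability of the trajectory s. *)
Definition traj_weight (V : finType) (e : rel V) (S0 : {set V}) (n : nat)
    (s : n.-tuple {set V}) : R :=
  (if nth set0 s 0 == S0 then 1 else 0) *
  \big[Rmult/1]_(0 <= i < n.-1) esp_Khat e (nth set0 s i) (nth set0 s i.+1).

Definition esp_hit_prob (V : finType) (e : rel V) (S0 : {set V}) (n : nat) (a : R) : R :=
  \big[Rplus/0]_(s : n.-tuple {set V})
     (if [exists i : 'I_n, Rleb (cond e (nth set0 s i)) a]
      then traj_weight e S0 s else 0).

Definition theta (V : finType) (e : rel V) (T : nat) : R :=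
  sqrt (4 * / INR T * ln (vol e [set: V])).

From HB Require Import structures.
From mathcomp Require Import all_boot.
From Stdlib Require Import Reals Lra Psatz.
Set Implicit Arguments.
Unset Strict Implicit.
Local Open Scope R_scope.

(* Potential-function proof of the hitting bound for the volume-biased
   evolving set process (ESP), following Andersen–Peres.

   1. One step of the ESP from S picks a uniform threshold U and moves to the
      level set {y | U <= p(y,S)}.  The law of such level sets is a
      "layer cake": masses of level sets add up to lengths of threshold
      intervals, and integrating a weight over them integrates it against
      min(r, p(y,S)).  With the degree as weight this shows
      that vol(S_t) is a martingale, and that on the half U <= 1/2 of the
      step the volume grows on average by the factor 1 + phi(S).
   2. Jensen on each half gives E[sqrt(vol S'/vol S)] <= 1 - phi(S)^2/8, and
      x ln x >= 2x - 2 sqrt x turns this into a drift of ln(vol S_t) under the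
      volume-biased kernel: E[ln vol S'] >= ln vol S + phi(S)^2/4.
   3. Summing the drift along trajectories (a Markov-property induction),
      E[sum_{j<T} phi(S_j)^2/4] <= ln vol V - ln vol S0 <= ln vol V.
   4. If every phi(S_j) exceeds sqrt c * theta_T, that sum is at least
      c ln vol V, so Markov's inequality yields the theorem. *)

Lemma Rplus_assoc_l (x y z : R) : x + (y + z) = x + y + z.
Proof. by rewrite Rplus_assoc. Qed.

HB.instance Definition _ :=
  Monoid.isComLaw.Build R 0 Rplus Rplus_assoc_l Rplus_comm Rplus_0_l.
HB.instance Definition _ := SemiGroup.isComLaw.Build R Rmin Rmin_assoc Rmin_comm.
HB.instance Definition _ := SemiGroup.isComLaw.Build R Rmax Rmax_assoc Rmax_comm.

Lemma big_setU1_semigroup (op : SemiGroup.com_law R) (idx : R) (V : finType)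
    (x : V) (A : {set V}) (F : V -> R) :
  x \notin A -> \big[op/idx]_(i in x |: A) F i = op (F x) (\big[op/idx]_(i in A) F i).
Proof.
move=> xA; rewrite -!big_enum.
rewrite (@perm_big _ op idx _ (enum (x |: A)) (x :: enum A)) ?big_cons //.
apply: uniq_perm; first exact: enum_uniq.
  by rewrite /= mem_enum xA enum_uniq.
by move=> y; rewrite mem_enum !inE mem_enum.
Qed.

Lemma bigmin_init (V : finType) (A : {set V}) (F : V -> R) r r0 : r <= r0 ->
  \big[Rmin/r]_(i in A) F i = Rmin r (\big[Rmin/r0]_(i in A) F i).
Proof.
move=> le_r_r0; elim/big_rec2: _ => [|i y1 y2 _ ->]; first by rewrite Rmin_left.
by rewrite !Rmin_assoc (Rmin_comm (F i)).
Qed.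

Lemma bigmax_init (V : finType) (A : {set V}) (F : V -> R) r r0 : r0 <= r ->
  \big[Rmax/r]_(i in A) F i = Rmax r (\big[Rmax/r0]_(i in A) F i).
Proof.
move=> le_r0_r; elim/big_rec2: _ => [|i y1 y2 _ ->]; first by rewrite Rmax_left.
by rewrite !Rmax_assoc (Rmax_comm (F i)).
Qed.

Lemma bigmin_le_init (V : finType) (A : {set V}) (F : V -> R) r :
  \big[Rmin/r]_(i in A) F i <= r.
Proof.
elim/big_rec: _ => [|i y _ le_y_r]; first exact: Rle_refl.
exact: Rle_trans (Rmin_r _ _) le_y_r.
Qed.

Lemma bigmin_le_mem (V : finType) (A : {set V}) (F : V -> R) r i0 : i0 \in A ->
  \big[Rmin/r]_(i in A) F i <= F i0.
Proof. by move=> Ai0; rewrite -(setD1K Ai0) big_setU1_semigroup ?setD11 //; apply: Rmin_l. Qed.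

Lemma bigmax_ge_mem (V : finType) (A : {set V}) (F : V -> R) r i0 : i0 \in A ->
  F i0 <= \big[Rmax/r]_(i in A) F i.
Proof. by move=> Ai0; rewrite -(setD1K Ai0) big_setU1_semigroup ?setD11 //; apply: Rmax_l. Qed.

Lemma sumR_ge0 (I : Type) (r : seq I) (P : pred I) (F : I -> R) :
  (forall i, P i -> 0 <= F i) -> 0 <= \big[Rplus/0]_(i <- r | P i) F i.
Proof. by move=> F_ge0; elim/big_ind: _ => //; [exact: Rle_refl | exact: Rplus_le_le_0_compat]. Qed.

Lemma sumR_le (I : Type) (r : seq I) (P : pred I) (F G : I -> R) :
  (forall i, P i -> F i <= G i) ->
  \big[Rplus/0]_(i <- r | P i) F i <= \big[Rplus/0]_(i <- r | P i) G i.
Proof.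
move=> le_FG; elim/big_rec2: _ => [|i y1 y2 Pi le_y]; first exact: Rle_refl.
exact: Rplus_le_compat (le_FG i Pi) le_y.
Qed.

(* Stated with Rplus and Rmult themselves (rather than the generic monoid
   operations) so that rewriting with them keeps goals amenable to ring/lra. *)
Lemma sumR_split (I : Type) (r : seq I) (P : pred I) (F G : I -> R) :
  \big[Rplus/0]_(i <- r | P i) (F i + G i) =
  \big[Rplus/0]_(i <- r | P i) F i + \big[Rplus/0]_(i <- r | P i) G i.
Proof. exact: big_split. Qed.

Lemma sumR_distrr (I : Type) (r : seq I) (P : pred I) (F : I -> R) c :
  c * \big[Rplus/0]_(i <- r | P i) F i = \big[Rplus/0]_(i <- r | P i) (c * F i).
Proof. by elim/big_rec2: _ => [|i y1 y2 _ <-]; ring. Qed.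

Lemma sumR_distrl (I : Type) (r : seq I) (P : pred I) (F : I -> R) c :
  \big[Rplus/0]_(i <- r | P i) F i * c = \big[Rplus/0]_(i <- r | P i) (F i * c).
Proof. by elim/big_rec2: _ => [|i y1 y2 _ <-]; ring. Qed.

Lemma sumR_nat_lb (F : nat -> R) m (n : nat) :
  (forall j : nat, (j < n)%nat -> m <= F j) -> INR n * m <= \big[Rplus/0]_(0 <= j < n) F j.
Proof.
elim: n => [|n IH] F_ge; first by rewrite big_geq //= Rmult_0_l; apply: Rle_refl.
rewrite S_INR Rmult_plus_distr_r Rmult_1_l big_nat_recr //=.
by apply: Rplus_le_compat; [apply: IH => j /ltnW; apply: F_ge | apply: F_ge].
Qed.

Lemma sumR_minus (I : Type) (r : seq I) (P : pred I) (F G : I -> R) :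
  \big[Rplus/0]_(i <- r | P i) (F i - G i) =
  \big[Rplus/0]_(i <- r | P i) F i - \big[Rplus/0]_(i <- r | P i) G i.
Proof. by elim/big_rec3: _ => [|i y1 y2 y3 _ ->]; ring. Qed.

Lemma sumR_delta (T : finType) (a : T) (F : T -> R) :
  \big[Rplus/0]_x ((if x == a then 1 else 0) * F x) = F a.
Proof.
rewrite (bigD1 a) //= eqxx big1 /= => [|x /negbTE ->]; last exact: Rmult_0_l.
by rewrite Rplus_0_r Rmult_1_l.
Qed.

Lemma interval_length_split a b q :
  Rmax 0 (b - Rmax q a) + Rmax 0 (Rmin q b - a) = Rmax 0 (b - a).
Proof. by rewrite /Rmax /Rmin; repeat destruct Rle_dec; lra. Qed.

(* For S a subset of A, [level_mass q l r A S] is the length of the set of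
   thresholds U in (l, r] whose level set {y in A | U <= q y} is exactly S.
   The one-step law of the evolving set process is of this form. *)
Definition level_mass (V : finType) (q : V -> R) (l r : R) (A S : {set V}) : R :=
  Rmax 0 (\big[Rmin/r]_(y in S) q y - \big[Rmax/l]_(y in A :\: S) q y).

Lemma level_mass_ge0 (V : finType) (q : V -> R) l r (A S : {set V}) :
  0 <= level_mass q l r A S.
Proof. exact: Rmax_l. Qed.

Lemma esp_K_level_mass (V : finType) (e : rel V) (S S' : {set V}) :
  esp_K e S S' = level_mass (pS e ^~ S) 0 1 [set: V] S'.
Proof. by rewrite /level_mass setTD. Qed.

Lemma level_mass_split (V : finType) (q : V -> R) l m r (A S : {set V}) :
  l <= m <= r -> level_mass q l r A S = level_mass q l m A S + level_mass q m r A S.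
Proof.
case=> le_lm le_mr; rewrite /level_mass (bigmin_init _ _ le_mr) (bigmax_init _ _ le_lm).
by rewrite Rplus_comm interval_length_split.
Qed.

Lemma sum_powersetU1 (V : finType) (x : V) (A : {set V}) (f : {set V} -> R) :
  x \notin A ->
  \big[Rplus/0]_(S in powerset (x |: A)) f S =
  \big[Rplus/0]_(S in powerset A) (f S + f (x |: S)).
Proof.
move=> xA; rewrite sumR_split /= (@bigID _ _ Rplus _ (index_enum _)
  (fun S : {set V} => x \in S) (fun S => S \in powerset (x |: A)) f) /= Rplus_comm.
congr (_ + _).
  by apply: eq_bigl => S; rewrite !powersetE -(setU1K xA) subsetD1 setU1K.
rewrite (reindex_onto (fun S => x |: S) (fun S => S :\ x)) /=; last first.
  by move=> S /andP [_ xS]; rewrite setD1K.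
apply: eq_bigl => S; rewrite !powersetE setU11 andbT.
apply/idP/idP => [/andP [sSA /eqP <-] | sSA].
  by rewrite -(setU1K xA); apply: setSD.
have xS : x \notin S by apply: contra xA => /(subsetP sSA).
by rewrite setU1K // eqxx andbT setUS.
Qed.

Lemma level_mass_partition (V : finType) (q : V -> R) l r (A : {set V}) :
  \big[Rplus/0]_(S in powerset A) level_mass q l r A S = Rmax 0 (r - l).
Proof.
rewrite -[A]set_enum; elim: (enum A) (enum_uniq A) => [_ | x s IH /= /andP [xs us]].
  have -> : [set y in [::]] = set0 :> {set V} by apply/setP=> y; rewrite !inE.
  by rewrite powerset0 big_set1 /level_mass setD0 !big_set0.
have -> : [set y in x :: s] = x |: [set y in s] by apply/setP=> y; rewrite !inE.
have xA : x \notin [set y in s] by rewrite inE.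
rewrite sum_powersetU1 // -(IH us); apply: eq_bigr => S; rewrite powersetE => sSA.
have xS : x \notin S by apply: contra xA => /(subsetP sSA).
rewrite /level_mass.
have -> : (x |: [set y in s]) :\: S = x |: ([set y in s] :\: S).
  by apply/setP=> y; rewrite !inE; case: (eqVneq y x) => [->|] //=; rewrite (negbTE xS).
have -> : (x |: [set y in s]) :\: (x |: S) = [set y in s] :\: S.
  by apply/setP=> y; rewrite !inE; case: (eqVneq y x) => [->|]; rewrite ?(negbTE xs) ?andbF.
rewrite big_setU1_semigroup; last by rewrite !inE (negbTE xs) andbF.
by rewrite (big_setU1_semigroup _ _ _ xS) interval_length_split.
Qed.

Lemma level_mass_total (V : finType) (q : V -> R) l r :
  \big[Rplus/0]_(S : {set V}) level_mass q l r [set: V] S = Rmax 0 (r - l).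
Proof.
by rewrite -(level_mass_partition q l r [set: V]) powersetT; apply: eq_bigl => S; rewrite inE.
Qed.

(* The thresholds whose level set contains y form the interval (l, min r (q y)]. *)
Lemma level_mass_mem (V : finType) (q : V -> R) l r (y : V) :
  \big[Rplus/0]_(S : {set V}) (level_mass q l r [set: V] S * (if y \in S then 1 else 0))
   = Rmax 0 (Rmin r (q y) - l).
Proof.
rewrite -(level_mass_total q l); apply: eq_bigr => S _; rewrite /level_mass.
case: ifP => yS.
  rewrite Rmult_1_r (bigmin_init _ _ (Rmin_l r (q y))) Rmin_right //.
  by apply: Rmin_glb; [apply: bigmin_le_init | exact: bigmin_le_mem].
rewrite Rmult_0_r Rmax_left //.
have := bigmin_le_init S q (Rmin r (q y)).
have : q y <= \big[Rmax/l]_(y0 in [set: V] :\: S) q y0 by apply: bigmax_ge_mem; rewrite !inE yS.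
have := Rmin_r r (q y); lra.
Qed.

Lemma level_mass_weighted (V : finType) (q w : V -> R) l r :
  \big[Rplus/0]_(S : {set V}) (level_mass q l r [set: V] S * \big[Rplus/0]_(y in S) w y)
   = \big[Rplus/0]_y (w y * Rmax 0 (Rmin r (q y) - l)).
Proof.
transitivity (\big[Rplus/0]_(S : {set V}) \big[Rplus/0]_y
    (level_mass q l r [set: V] S * (w y * (if y \in S then 1 else 0)))).
  apply: eq_bigr => S _; rewrite (big_mkcond (fun y => y \in S)) sumR_distrr /=.
  by apply: eq_bigr => y _; case: ifP => _; rewrite ?Rmult_1_r ?Rmult_0_r.
rewrite exchange_big /=; apply: eq_bigr => y _.
rewrite -level_mass_mem sumR_distrr; apply: eq_bigr => S _ /=; ring.
Qed.

Lemma Rdiv_ge0 a b : 0 <= a -> 0 < b -> 0 <= a / b.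
Proof. by move=> a_ge0 b_gt0; apply: Rmult_le_pos => //; apply: Rlt_le; apply: Rinv_0_lt_compat. Qed.

Lemma ln_ge0 x : 1 <= x -> 0 <= ln x.
Proof.
move=> x_ge1; rewrite -ln_1; have [lt_1x | <-] := Rle_lt_or_eq_dec _ _ x_ge1; last exact: Rle_refl.
by apply: Rlt_le; apply: ln_increasing; lra.
Qed.

Lemma sqrt_le_amgm x t : 0 <= x -> 0 < t -> sqrt x <= (x / t + t) / 2.
Proof.
move=> x_ge0 t_gt0; have sqrt_sq := sqrt_sqrt x x_ge0; have sqrt_ge0 := sqrt_pos x.
apply: (Rmult_le_reg_l (2 * t)); first lra.
have -> : 2 * t * ((x / t + t) / 2) = x + t * t by field; lra.
have := Rle_0_sqr (sqrt x - t); rewrite /Rsqr; nra.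
Qed.

Lemma jensen_sqrt (I : finType) (w X : I -> R) m A :
  (forall i, 0 <= w i) -> (forall i, 0 <= X i) -> 0 < m ->
  \big[Rplus/0]_i w i = m -> \big[Rplus/0]_i (w i * X i) = A ->
  \big[Rplus/0]_i (w i * sqrt (X i)) <= sqrt (m * A).
Proof.
move=> w_ge0 X_ge0 m_gt0 mass_w mean_X.
set s := \big[Rplus/0]_i (w i * sqrt (X i)).
have [s_le0 | s_gt0] := Rle_lt_dec s 0; first by have := sqrt_pos (m * A); lra.
(* the AM-GM bound at every scale t, averaged against w *)
have amgm t : 0 < t -> s <= (A / t + m * t) / 2.
  move=> t_gt0; apply: (Rle_trans _ (\big[Rplus/0]_i (w i * ((X i / t + t) / 2)))).
    by apply: sumR_le => i _; apply: Rmult_le_compat_l => //; apply: sqrt_le_amgm.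
  rewrite -mass_w -mean_X /Rdiv !sumR_distrl -sumR_split /= sumR_distrl.
  by apply: Req_le; apply: eq_bigr => i _ /=; ring.
have amgm_at := amgm (s / m) (Rdiv_lt_0_compat _ _ s_gt0 m_gt0).
rewrite (_ : A / (s / m) + m * (s / m) = m * A / s + s) in amgm_at; last by field; lra.
have sq_le : s * s <= m * A.
  have inv_s : s * / s = 1 by apply: Rinv_r; lra.
  move: amgm_at; rewrite /Rdiv; nra.
by rewrite -(sqrt_square s); [apply: sqrt_le_1_alt | lra].
Qed.

Lemma sqrt_pair_bound f : 0 <= f <= 1 ->
  sqrt ((1 + f) / 4) + sqrt ((1 - f) / 4) <= 1 - f * f / 8.
Proof.
move=> [f_ge0 f_le1].
have le_of_sq a b : 0 <= b -> a * a <= b * b -> a <= b by move=> *; nra.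
set u := sqrt ((1 + f) / 4); set v := sqrt ((1 - f) / 4).
have u_sq : u * u = (1 + f) / 4 by apply: sqrt_sqrt; lra.
have v_sq : v * v = (1 - f) / 4 by apply: sqrt_sqrt; lra.
have u_ge0 : 0 <= u := sqrt_pos _.
have v_ge0 : 0 <= v := sqrt_pos _.
have uv_le : u * v <= (1 - f * f / 2) / 4.
  apply: le_of_sq; first nra.
  have -> : u * v * (u * v) = (u * u) * (v * v) by ring.
  rewrite u_sq v_sq; nra.
apply: le_of_sq; nra.
Qed.

(* x ln x >= 2x - 2 sqrt x, from ln s >= 1 - 1/s at s = sqrt x. *)
Lemma xlnx_ge x : 0 < x -> 2 * x - 2 * sqrt x <= x * ln x.
Proof.
move=> x_gt0; have s_gt0 : 0 < sqrt x by apply: sqrt_lt_R0.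
have x_eq := esym (sqrt_sqrt x (Rlt_le _ _ x_gt0)); set s := sqrt x in s_gt0 x_eq *.
have ln_x : ln x = 2 * ln s by rewrite x_eq ln_mult //; ring.
have ln_ge : 1 - / s <= ln s.
  have := exp_ineq1_le (ln (/ s)).
  by rewrite exp_ln ?ln_Rinv //; [lra | exact: Rinv_0_lt_compat].
have : s * (1 - / s) <= s * ln s by apply: Rmult_le_compat_l; lra.
have -> : s * (1 - / s) = s - 1 by field; lra.
rewrite ln_x x_eq; nra.
Qed.

Lemma sum_tuple_cons (T : finType) n (F : n.+1.-tuple T -> R) :
  \big[Rplus/0]_(t : n.+1.-tuple T) F t =
  \big[Rplus/0]_(x : T) \big[Rplus/0]_(t : n.-tuple T) F (cons_tuple x t).
Proof.
rewrite pair_bigA /= (reindex (fun p : T * n.-tuple T => cons_tuple p.1 p.2)) //=.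
exists (fun t : n.+1.-tuple T => (thead t, behead_tuple t)).
  by move=> [x t] _; congr pair; apply: val_inj.
by move=> t _; rewrite [in RHS](tuple_eta t); apply: val_inj.
Qed.

Lemma sum_tuple0 (T : finType) (F : 0.-tuple T -> R) :
  \big[Rplus/0]_(t : 0.-tuple T) F t = F [tuple].
Proof. by rewrite (big_pred1 [tuple]) // => t; symmetry; apply/eqP; exact: tuple0. Qed.

Lemma markov_event (I : finType) (w G : I -> R) (E : pred I) m :
  (forall i, 0 <= w i) -> (forall i, 0 <= G i) -> 0 < m ->
  \big[Rplus/0]_i w i = 1 -> (forall i, ~~ E i -> m <= G i) ->
  1 - \big[Rplus/0]_i (w i * G i) / m <= \big[Rplus/0]_i (if E i then w i else 0).
Proof.
move=> w_ge0 G_ge0 m_gt0 mass G_off_E.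
have miss_le : m * \big[Rplus/0]_i (if E i then 0 else w i) <= \big[Rplus/0]_i (w i * G i).
  rewrite sumR_distrr; apply: sumR_le => i _; case: ifP => [_ | /negbT /G_off_E m_le].
    by rewrite Rmult_0_r; apply: Rmult_le_pos.
  by rewrite Rmult_comm; apply: Rmult_le_compat_l.
have hit_miss : \big[Rplus/0]_i (if E i then w i else 0) =
    1 - \big[Rplus/0]_i (if E i then 0 else w i).
  by rewrite -mass -sumR_minus; apply: eq_bigr => i _; case: ifP => _; ring.
rewrite hit_miss; apply: Rplus_le_compat_l; apply: Ropp_le_contravar.
apply: (Rmult_le_reg_l m) => //; set EG := \big[Rplus/0]_i (w i * G i).
by have -> : m * (EG / m) = EG by field; lra.
Qed.

Lemma INR_card (V : finType) (A : {pred V}) : INR #|A| = \big[Rplus/0]_(x in A) 1.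
Proof. by rewrite -sum1_card (big_morph INR plus_INR (erefl (INR 0))). Qed.

Section EvolvingSets.

Variables (V : finType) (e : rel V).
Hypothesis e_sym : symmetric e.
Hypothesis e_irr : irreflexive e.
Hypothesis deg_ge1 : forall x : V, leq 1 (deg e x).

Lemma deg_ge1_R (y : V) : 1 <= INR (deg e y).
Proof. by apply: (le_INR 1); apply/leP. Qed.

Lemma deg_gt0 (y : V) : 0 < INR (deg e y).
Proof. by have := deg_ge1_R y; lra. Qed.

Lemma vol_ge0 (S : {set V}) : 0 <= vol e S.
Proof. by apply: sumR_ge0 => y _; apply: pos_INR. Qed.

Lemma vol_sub (A B : {set V}) : A \subset B -> vol e A <= vol e B.
Proof.
move=> /subsetP sAB; rewrite /vol big_mkcond [X in _ <= X]big_mkcond /=.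
apply: sumR_le => y _; case: ifP => [/sAB -> | _]; first exact: Rle_refl.
by case: ifP => _; [apply: pos_INR | apply: Rle_refl].
Qed.

Lemma vol_le_setT (S : {set V}) : vol e S <= vol e [set: V].
Proof. exact/vol_sub/subsetT. Qed.

Definition nbrs_in (S : {set V}) (y : V) : R :=
  \big[Rplus/0]_(x in S) (if e y x then 1 else 0).

Lemma deg_nbrs (y : V) : INR (deg e y) = \big[Rplus/0]_x (if e y x then 1 else 0).
Proof. by rewrite /deg INR_card big_mkcond; apply: eq_bigr => x _; rewrite inE. Qed.

Lemma nbrs_in_bounds (S : {set V}) (y : V) : 0 <= nbrs_in S y <= INR (deg e y).
Proof.
have ind_ge0 x : 0 <= (if e y x then 1 else 0) by case: ifP => _; lra.
split; first exact: sumR_ge0.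
rewrite deg_nbrs /nbrs_in big_mkcond /=; apply: sumR_le => x _.
by case: ifP => _; [apply: Rle_refl | apply: ind_ge0].
Qed.

(* Each edge is seen once from each endpoint, so the neighbour counts of S
   add up to its volume ... *)
Lemma sum_nbrs_in (S : {set V}) : \big[Rplus/0]_y nbrs_in S y = vol e S.
Proof.
rewrite /nbrs_in /vol exchange_big /=; apply: eq_bigr => x _.
by rewrite deg_nbrs; apply: eq_bigr => y _; rewrite e_sym.
Qed.

Lemma sum_nbrs_in_out (S : {set V}) :
  \big[Rplus/0]_y (if y \in S then 0 else nbrs_in S y) = bdry e S.
Proof.
rewrite /bdry INR_card [RHS]big_mkcond /=.
transitivity (\big[Rplus/0]_x \big[Rplus/0]_y
  (if [&& e x y, x \in S & y \notin S] then 1 else 0)); last first.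
  by rewrite pair_bigA /=; apply: eq_bigr => [[x y]] _; rewrite !inE.
rewrite exchange_big /=; apply: eq_bigr => y _; rewrite /nbrs_in big_mkcond /=.
case: ifP => yS; first by rewrite big1 // => x _; rewrite !andbF.
by apply: eq_bigr => x _; rewrite andbT (e_sym x y); case: (x \in S); case: (e y x).
Qed.

Lemma pS_nbrs (S : {set V}) (y : V) :
  pS e y S = (if y \in S then / 2 else 0) + nbrs_in S y * / (2 * INR (deg e y)).
Proof.
rewrite /pS /nbrs_in sumR_distrl /=.
have -> : \big[Rplus/0]_(x in S) ptrans e y x = \big[Rplus/0]_(x in S)
    ((if y == x then / 2 else 0) + (if e y x then 1 else 0) * / (2 * INR (deg e y))).
  apply: eq_bigr => x _; rewrite /ptrans.
  by case: eqP => [<- | _]; [rewrite e_irr | case: ifP => _]; ring.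
rewrite sumR_split /=; congr (_ + _); case: ifP => yS.
  by rewrite (bigD1 y yS) eqxx big1 /= ?Rplus_0_r // => x /andP [_ /negbTE]; rewrite eq_sym => ->.
by rewrite big1 // => x xS; case: eqP => // y_x; rewrite y_x xS in yS.
Qed.

Lemma deg_pS (S : {set V}) (y : V) :
  INR (deg e y) * pS e y S = (if y \in S then INR (deg e y) / 2 else 0) + nbrs_in S y / 2.
Proof. by have := deg_gt0 y; rewrite pS_nbrs; case: ifP => _ ?; field; lra. Qed.

Lemma pS_bounds (S : {set V}) (y : V) :
  [/\ 0 <= pS e y S <= 1, y \in S -> / 2 <= pS e y S & y \notin S -> pS e y S <= / 2].
Proof.
have [nb_ge0 nb_le] := nbrs_in_bounds S y; have deg_pos := deg_gt0 y.
have inv_ge0 : 0 <= / (2 * INR (deg e y)) by apply: Rlt_le; apply: Rinv_0_lt_compat; lra.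
have move_ge0 : 0 <= nbrs_in S y * / (2 * INR (deg e y)) by apply: Rmult_le_pos.
have move_le : nbrs_in S y * / (2 * INR (deg e y)) <= / 2.
  have -> : / 2 = INR (deg e y) * / (2 * INR (deg e y)) by field; lra.
  exact: Rmult_le_compat_r.
by rewrite pS_nbrs; case: ifP => _; split => //=; try move=> _; lra.
Qed.

Lemma sum_half_deg_in (S : {set V}) :
  \big[Rplus/0]_y (if y \in S then INR (deg e y) / 2 else 0) = vol e S / 2.
Proof.
rewrite /vol /Rdiv sumR_distrl [RHS]big_mkcond /=.
by apply: eq_bigr => y _; case: ifP => _; ring.
Qed.

Lemma level_mass_vol (q : V -> R) l r :
  \big[Rplus/0]_(S' : {set V}) (level_mass q l r [set: V] S' * vol e S')
   = \big[Rplus/0]_y (INR (deg e y) * Rmax 0 (Rmin r (q y) - l)).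
Proof. exact: level_mass_weighted. Qed.

(* Thresholds U <= 1/2 produce supersets of S, thresholds U > 1/2 subsets;
   each half of the step has probability 1/2. *)
Lemma esp_K_split (S S' : {set V}) :
  esp_K e S S' = level_mass (pS e ^~ S) 0 (/ 2) [set: V] S'
               + level_mass (pS e ^~ S) (/ 2) 1 [set: V] S'.
Proof. by rewrite esp_K_level_mass; apply: level_mass_split; lra. Qed.

Lemma esp_vol_mean (S : {set V}) :
  \big[Rplus/0]_S' (esp_K e S S' * vol e S') = vol e S.
Proof.
under eq_bigr do rewrite esp_K_level_mass.
rewrite level_mass_vol; transitivity
  (\big[Rplus/0]_y ((if y \in S then INR (deg e y) / 2 else 0) + nbrs_in S y / 2)).
  apply: eq_bigr => y _; rewrite -deg_pS; have [[p_ge0 p_le1] _ _] := pS_bounds S y.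
  by rewrite Rmin_right // Rminus_0_r Rmax_right.
by rewrite sumR_split /= sum_half_deg_in /Rdiv -sumR_distrl /= sum_nbrs_in; field.
Qed.

Lemma esp_vol_mean_grow (S : {set V}) :
  \big[Rplus/0]_S' (level_mass (pS e ^~ S) 0 (/ 2) [set: V] S' * vol e S')
   = (vol e S + bdry e S) / 2.
Proof.
rewrite level_mass_vol; transitivity (\big[Rplus/0]_y
  ((if y \in S then INR (deg e y) / 2 else 0) + (if y \in S then 0 else nbrs_in S y) / 2)).
  apply: eq_bigr => y _; have [[p_ge0 p_le1] p_in p_out] := pS_bounds S y.
  rewrite Rminus_0_r; case: ifP => yS.
    by rewrite Rmin_left ?Rmax_right; [field | lra | apply: p_in].
  rewrite Rmin_right ?Rmax_right; [|lra | by apply: p_out; rewrite yS].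
  by rewrite deg_pS yS; ring.
by rewrite sumR_split /= sum_half_deg_in /Rdiv -sumR_distrl /= sum_nbrs_in_out; field.
Qed.

Lemma bdry_le_vol (S : {set V}) : bdry e S <= vol e S.
Proof.
rewrite -sum_nbrs_in_out -sum_nbrs_in; apply: sumR_le => y _.
by case: ifP => _; [apply: (proj1 (nbrs_in_bounds S y)) | apply: Rle_refl].
Qed.

Lemma cond_bounds (S : {set V}) : 0 < vol e S -> 0 <= cond e S <= 1.
Proof.
move=> vol_gt0; have bdry_le := bdry_le_vol S; have bdry_ge0 : 0 <= bdry e S := pos_INR _.
rewrite /cond; split; first by apply: Rdiv_ge0.
by apply: (Rmult_le_reg_r (vol e S)) => //; rewrite /Rdiv Rmult_assoc Rinv_l; lra.
Qed.

Lemma esp_Khat_ge0 (S S' : {set V}) : 0 <= esp_Khat e S S'.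
Proof.
apply: Rmult_le_pos; last exact: Rmax_l.
have [vol_gt0 | <-] := Rle_lt_or_eq_dec _ _ (vol_ge0 S); last by rewrite /Rdiv Rinv_0 Rmult_0_r; lra.
by apply: Rdiv_ge0; [apply: vol_ge0 |].
Qed.

Lemma esp_Khat_vol0 (S S' : {set V}) : vol e S' = 0 -> esp_Khat e S S' = 0.
Proof. by move=> vol0; rewrite /esp_Khat vol0 /Rdiv !Rmult_0_l. Qed.

Lemma esp_Khat_sum (S : {set V}) : 0 < vol e S -> \big[Rplus/0]_S' esp_Khat e S S' = 1.
Proof.
move=> vol_gt0; transitivity ((\big[Rplus/0]_S' (esp_K e S S' * vol e S')) * / vol e S).
  by rewrite sumR_distrl; apply: eq_bigr => S' _; rewrite /esp_Khat /Rdiv /=; ring.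
by rewrite esp_vol_mean; field; lra.
Qed.

(* Square-root drift of the volume: E_K[sqrt (vol S' / vol S)] <= 1 - cond S^2 / 8.
   By Jensen on each half of the step, where the volume ratio has mean
   1 + cond S on the growing half and 1 - cond S on the shrinking half. *)
Lemma esp_sqrt_drift (S : {set V}) : 0 < vol e S ->
  \big[Rplus/0]_S' (esp_K e S S' * sqrt (vol e S' / vol e S)) <= 1 - cond e S * cond e S / 8.
Proof.
move=> vol_gt0; set X := fun S' => vol e S' / vol e S.
set grow := level_mass (pS e ^~ S) 0 (/ 2) [set: V].
set shrink := level_mass (pS e ^~ S) (/ 2) 1 [set: V].
have X_ge0 S' : 0 <= X S' by apply: Rdiv_ge0 => //; apply: vol_ge0.
have mean_ratio (w : {set V} -> R) m :
    \big[Rplus/0]_S' (w S' * vol e S') = m -> \big[Rplus/0]_S' (w S' * X S') = m / vol e S.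
  by move=> <-; rewrite /X /Rdiv sumR_distrl; apply: eq_bigr => S' _ /=; ring.
have half_gt0 : 0 < / 2 by apply: Rinv_0_lt_compat; lra.
have grow_mass : \big[Rplus/0]_S' grow S' = / 2.
  by rewrite level_mass_total Rminus_0_r Rmax_right; lra.
have shrink_mass : \big[Rplus/0]_S' shrink S' = / 2.
  by rewrite level_mass_total Rmax_right; lra.
have grow_mean : \big[Rplus/0]_S' (grow S' * X S') = (1 + cond e S) / 2.
  by rewrite (mean_ratio _ _ (esp_vol_mean_grow S)) /cond; field; lra.
have shrink_mean : \big[Rplus/0]_S' (shrink S' * X S') = (1 - cond e S) / 2.
  have -> : \big[Rplus/0]_S' (shrink S' * X S') =
      \big[Rplus/0]_S' (esp_K e S S' * X S') - \big[Rplus/0]_S' (grow S' * X S').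
    by rewrite -sumR_minus; apply: eq_bigr => S' _; rewrite esp_K_split /grow /shrink; ring.
  by rewrite (mean_ratio _ _ (esp_vol_mean S)) grow_mean /cond; field; lra.
have grow_jensen := jensen_sqrt (level_mass_ge0 _ _ _ _) X_ge0 half_gt0 grow_mass grow_mean.
have shrink_jensen :=
  jensen_sqrt (level_mass_ge0 _ _ _ _) X_ge0 half_gt0 shrink_mass shrink_mean.
have -> : \big[Rplus/0]_S' (esp_K e S S' * sqrt (vol e S' / vol e S)) =
    \big[Rplus/0]_S' (grow S' * sqrt (X S')) + \big[Rplus/0]_S' (shrink S' * sqrt (X S')).
  by rewrite -sumR_split; apply: eq_bigr => S' _ /=; rewrite esp_K_split /grow /shrink /X; ring.
rewrite (_ : / 2 * ((1 + cond e S) / 2) = (1 + cond e S) / 4) in grow_jensen; last by field.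
rewrite (_ : / 2 * ((1 - cond e S) / 2) = (1 - cond e S) / 4) in shrink_jensen; last by field.
have := sqrt_pair_bound (cond_bounds vol_gt0); rewrite /grow /shrink; lra.
Qed.

(* Termwise comparison of log and square root of the volume ratio x,
   from x ln x >= 2x - 2 sqrt x (the biased kernel carries the factor x). *)
Lemma esp_log_term (S S' : {set V}) : 0 < vol e S ->
  esp_Khat e S S' * ln (vol e S) + 2 * esp_Khat e S S'
    - 2 * (esp_K e S S' * sqrt (vol e S' / vol e S))
  <= esp_Khat e S S' * ln (vol e S').
Proof.
move=> vol_gt0; have K_ge0 : 0 <= esp_K e S S' := Rmax_l _ _.
have [vol'_gt0 | /esym vol'0] := Rle_lt_or_eq_dec _ _ (vol_ge0 S'); last first.
  by rewrite esp_Khat_vol0 // vol'0 /Rdiv !Rmult_0_l sqrt_0; lra.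
set x := vol e S' / vol e S; have x_gt0 : 0 < x by apply: Rdiv_lt_0_compat.
have -> : esp_Khat e S S' = x * esp_K e S S' by [].
have -> : ln (vol e S') = ln (vol e S) + ln x.
  by rewrite -ln_mult //; congr ln; rewrite /x; field; lra.
have : esp_K e S S' * (2 * x - 2 * sqrt x) <= esp_K e S S' * (x * ln x).
  by apply: Rmult_le_compat_l => //; apply: xlnx_ge.
lra.
Qed.

Definition log_gain (S : {set V}) : R := cond e S * cond e S / 4.

Lemma esp_log_drift (S : {set V}) : 0 < vol e S ->
  ln (vol e S) + log_gain S <= \big[Rplus/0]_S' (esp_Khat e S S' * ln (vol e S')).
Proof.
move=> vol_gt0; have mass := esp_Khat_sum vol_gt0; have drift := esp_sqrt_drift vol_gt0.
apply: Rle_trans; last by apply: sumR_le => S' _; apply: esp_log_term.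
have -> : \big[Rplus/0]_S' (esp_Khat e S S' * ln (vol e S) + 2 * esp_Khat e S S'
      - 2 * (esp_K e S S' * sqrt (vol e S' / vol e S)))
    = (\big[Rplus/0]_S' esp_Khat e S S') * ln (vol e S) + 2 * \big[Rplus/0]_S' esp_Khat e S S'
      - 2 * \big[Rplus/0]_S' (esp_K e S S' * sqrt (vol e S' / vol e S)).
  by rewrite sumR_minus sumR_split -!sumR_distrr -sumR_distrl.
rewrite mass /log_gain; lra.
Qed.

Lemma esp_potential_step (S : {set V}) (H : {set V} -> R) : 0 < vol e S ->
  (forall S', 0 < vol e S' -> H S' <= ln (vol e [set: V]) - ln (vol e S')) ->
  \big[Rplus/0]_S' (esp_Khat e S S' * H S')
    <= ln (vol e [set: V]) - ln (vol e S) - log_gain S.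
Proof.
move=> vol_gt0 H_le; have mass := esp_Khat_sum vol_gt0; have drift := esp_log_drift vol_gt0.
apply: (Rle_trans _ (\big[Rplus/0]_S'
  (esp_Khat e S S' * ln (vol e [set: V]) - esp_Khat e S S' * ln (vol e S')))).
  apply: sumR_le => S' _; have Khat_ge0 := esp_Khat_ge0 S S'.
  have [vol'_gt0 | /esym vol'0] := Rle_lt_or_eq_dec _ _ (vol_ge0 S').
    by have := H_le S' vol'_gt0; nra.
  by rewrite esp_Khat_vol0 //; lra.
have -> : \big[Rplus/0]_S'
    (esp_Khat e S S' * ln (vol e [set: V]) - esp_Khat e S S' * ln (vol e S'))
    = (\big[Rplus/0]_S' esp_Khat e S S') * ln (vol e [set: V])
      - \big[Rplus/0]_S' (esp_Khat e S S' * ln (vol e S')).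
  by rewrite sumR_minus -sumR_distrl.
by rewrite mass; lra.
Qed.

Lemma traj_weight_head n (S0 : {set V}) (t : n.-tuple {set V}) :
  traj_weight e S0 t = (if S0 == nth set0 t 0 then 1 else 0) * traj_weight e (nth set0 t 0) t.
Proof. by rewrite /traj_weight eqxx eq_sym; case: ifP => _; ring. Qed.

Lemma traj_weight_cons n (S0 x : {set V}) (t : n.+1.-tuple {set V}) :
  traj_weight e S0 (cons_tuple x t) =
  (if x == S0 then 1 else 0) * (esp_Khat e x (nth set0 t 0) * traj_weight e (nth set0 t 0) t).
Proof. by rewrite /traj_weight /= big_nat_recl // eqxx Rmult_1_l. Qed.

Lemma sum_traj_step n (S0 : {set V}) (F : n.+2.-tuple {set V} -> R) :
  \big[Rplus/0]_s (traj_weight e S0 s * F s) =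
  \big[Rplus/0]_S' (esp_Khat e S0 S' *
     \big[Rplus/0]_t (traj_weight e S' t * F (cons_tuple S0 t))).
Proof.
rewrite sum_tuple_cons; transitivity (\big[Rplus/0]_x ((if x == S0 then 1 else 0) *
  \big[Rplus/0]_(t : n.+1.-tuple {set V})
     (esp_Khat e x (nth set0 t 0) * traj_weight e (nth set0 t 0) t * F (cons_tuple x t)))).
  apply: eq_bigr => x _; rewrite sumR_distrr; apply: eq_bigr => t _ /=.
  by rewrite traj_weight_cons Rmult_assoc.
rewrite sumR_delta; transitivity
  (\big[Rplus/0]_(t : n.+1.-tuple {set V}) \big[Rplus/0]_S' ((if S' == nth set0 t 0 then 1 else 0) *
     (esp_Khat e S0 S' * traj_weight e (nth set0 t 0) t * F (cons_tuple S0 t)))).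
  by apply: eq_bigr => t _; rewrite sumR_delta.
rewrite exchange_big /=; apply: eq_bigr => S' _; rewrite sumR_distrr; apply: eq_bigr => t _ /=.
by rewrite (traj_weight_head S'); case: ifP => _; ring.
Qed.

Lemma esp_Khat_sum_eq (S : {set V}) (F G : {set V} -> R) :
  (forall S', 0 < vol e S' -> F S' = G S') ->
  \big[Rplus/0]_S' (esp_Khat e S S' * F S') = \big[Rplus/0]_S' (esp_Khat e S S' * G S').
Proof.
move=> eq_FG; apply: eq_bigr => S' _.
have [vol_gt0 | /esym vol0] := Rle_lt_or_eq_dec _ _ (vol_ge0 S'); first by rewrite eq_FG.
by rewrite esp_Khat_vol0 // !Rmult_0_l.
Qed.

Lemma ln_vol_le_setT (S : {set V}) : 0 < vol e S -> ln (vol e S) <= ln (vol e [set: V]).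
Proof.
move=> vol_gt0; have [lt_vol | ->] := Rle_lt_or_eq_dec _ _ (vol_le_setT S); last exact: Rle_refl.
by apply: Rlt_le; apply: ln_increasing.
Qed.

Lemma traj_mass n (S0 : {set V}) : 0 < vol e S0 ->
  \big[Rplus/0]_(s : n.+1.-tuple {set V}) traj_weight e S0 s = 1.
Proof.
elim: n S0 => [|n IH] S0 vol_gt0.
  rewrite sum_tuple_cons -[RHS](sumR_delta S0 (fun=> 1)); apply: eq_bigr => x _.
  by rewrite sum_tuple0 /traj_weight big_geq.
transitivity (\big[Rplus/0]_(s : n.+2.-tuple {set V}) (traj_weight e S0 s * 1)).
  by apply: eq_bigr => s _; rewrite Rmult_1_r.
rewrite sum_traj_step -[RHS](esp_Khat_sum vol_gt0).
transitivity (\big[Rplus/0]_S' (esp_Khat e S0 S' * 1)); last first.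
  by apply: eq_bigr => S' _; rewrite Rmult_1_r.
apply: esp_Khat_sum_eq => S' vol'_gt0; rewrite -[RHS](IH S' vol'_gt0).
by apply: eq_bigr => t _; rewrite Rmult_1_r.
Qed.

Definition traj_gain n (s : n.-tuple {set V}) : R :=
  \big[Rplus/0]_(0 <= j < n) log_gain (nth set0 s j).

Lemma traj_potential n (S0 : {set V}) : 0 < vol e S0 ->
  \big[Rplus/0]_(s : n.+1.-tuple {set V}) (traj_weight e S0 s * traj_gain s)
    <= ln (vol e [set: V]) - ln (vol e S0).
Proof.
elim: n S0 => [|n IH] S0 vol_gt0.
  have -> : \big[Rplus/0]_(s : 1.-tuple {set V}) (traj_weight e S0 s * traj_gain s)
      = log_gain S0.
    rewrite sum_tuple_cons -(sumR_delta S0 log_gain); apply: eq_bigr => x _.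
    by rewrite sum_tuple0 /traj_weight /traj_gain big_geq // big_nat1 /= Rmult_1_r.
  have := esp_potential_step (H := fun=> 0) vol_gt0.
  have -> : \big[Rplus/0]_S' (esp_Khat e S0 S' * 0) = 0 by rewrite big1 // => S' _; ring.
  have room S' : 0 < vol e S' -> 0 <= ln (vol e [set: V]) - ln (vol e S').
    by move=> vol'_gt0; have := ln_vol_le_setT vol'_gt0; lra.
  by move=> /(_ room); lra.
rewrite sum_traj_step.
set H := fun S' => \big[Rplus/0]_(t : n.+1.-tuple {set V}) (traj_weight e S' t * traj_gain t).
rewrite (@esp_Khat_sum_eq _ _ (fun S' => log_gain S0 + H S')); last first.
  move=> S' vol'_gt0; rewrite /H -[X in X + _]Rmult_1_r -(traj_mass n vol'_gt0).
  rewrite sumR_distrr -sumR_split; apply: eq_bigr => t _.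
  by rewrite /traj_gain big_nat_recl //=; ring.
rewrite (@eq_bigr _ _ _ _ _ _ _ (fun S' => esp_Khat e S0 S' * log_gain S0 + esp_Khat e S0 S' * H S'));
  last by move=> S' _; ring.
rewrite sumR_split -sumR_distrl esp_Khat_sum //.
have bound := esp_potential_step (H := H) vol_gt0 (fun S' => IH S').
by apply: Rle_trans (Rplus_le_compat_l (1 * log_gain S0) _ _ bound) _; lra.
Qed.

Lemma traj_weight_ge0 n (S0 : {set V}) (s : n.-tuple {set V}) : 0 <= traj_weight e S0 s.
Proof.
apply: Rmult_le_pos; first by case: ifP => _; lra.
by elim/big_ind: _ => [|x y|i _]; [lra | exact: Rmult_le_pos | exact: esp_Khat_ge0].
Qed.

Lemma traj_gain_ge0 n (s : n.-tuple {set V}) : 0 <= traj_gain s.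
Proof.
apply: sumR_ge0 => j _; rewrite /log_gain.
by have := Rle_0_sqr (cond e (nth set0 s j)); rewrite /Rsqr; lra.
Qed.

Lemma traj_gain_miss n (s : n.-tuple {set V}) a : 0 <= a ->
  ~~ [exists i : 'I_n, Rleb (cond e (nth set0 s i)) a] -> INR n * (a * a / 4) <= traj_gain s.
Proof.
move=> a_ge0 /existsPn miss; apply: sumR_nat_lb => j lt_jn.
have /negP := miss (Ordinal lt_jn); rewrite /Rleb /log_gain /=.
case: Rle_dec => // /Rnot_le_lt lt_a_cond _.
have : a * a <= cond e (nth set0 s j) * cond e (nth set0 s j) by apply: Rmult_le_compat; lra.
lra.
Qed.

Lemma vol_ge1 (S : {set V}) : S != set0 -> 1 <= vol e S.
Proof.
case/set0Pn=> x xS; have : [set x] \subset S by rewrite sub1set.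
move=> /vol_sub; rewrite /vol big_set1; have := deg_ge1_R x; lra.
Qed.

(* The total volume is at least 2: some vertex has a neighbour. *)
Lemma ln_vol_setT_gt0 (x : V) : 0 < ln (vol e [set: V]).
Proof.
have /card_gt0P [y] : (0 < deg e x)%nat := deg_ge1 x; rewrite inE => exy.
have x_y : x \notin [set y] by rewrite inE; apply: contraTneq exy => ->; rewrite e_irr.
have : vol e [set x; y] <= vol e [set: V] := vol_le_setT _.
rewrite /vol big_setU1 //= big_set1 -ln_1 => le_vol; apply: ln_increasing; first lra.
by have := deg_ge1_R x; have := deg_ge1_R y; lra.
Qed.

End EvolvingSets.

(* The threshold sqrt c * theta_T is chosen so that T steps above it force an
   accumulated gain of c * ln vol V. *)
Lemma theta_threshold (V : finType) (e : rel V) (T : nat) c : (0 < T)%nat -> 0 <= c ->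
  0 <= ln (vol e [set: V]) ->
  INR T * ((sqrt c * theta e T) * (sqrt c * theta e T) / 4) = c * ln (vol e [set: V]).
Proof.
move=> /ltP T_gt0 c_ge0 L_ge0; have T_pos : 0 < INR T by apply: lt_0_INR.
have inner_ge0 : 0 <= 4 * / INR T * ln (vol e [set: V]).
  by apply: Rmult_le_pos => //; apply: Rmult_le_pos; [lra | apply: Rlt_le; apply: Rinv_0_lt_compat].
have -> : sqrt c * theta e T * (sqrt c * theta e T)
    = (sqrt c * sqrt c) * (theta e T * theta e T) by ring.
by rewrite /theta !sqrt_sqrt //; field; lra.
Qed.

Theorem corollary1 (V : finType) (e : rel V)
    (esym : symmetric e) (eirr : irreflexive e)
    (hdeg : forall x : V, leq 1 (deg e x))
    (S0 : {set V}) (hS0 : S0 != set0)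
    (T : nat) (hT : leq 1 T) (c : R) (hc : 0 < c) :
  esp_hit_prob e S0 T (sqrt c * theta e T) >= 1 - / c.
Proof.
have [x0 _] := set0Pn _ hS0.
have vol_S0 : 1 <= vol e S0 := vol_ge1 hdeg hS0.
have vol_S0_gt0 : 0 < vol e S0 by lra.
have L_gt0 : 0 < ln (vol e [set: V]) := ln_vol_setT_gt0 eirr hdeg x0.
have cL_gt0 : 0 < c * ln (vol e [set: V]) by apply: Rmult_lt_0_compat.
have a_ge0 : 0 <= sqrt c * theta e T by apply: Rmult_le_pos; apply: sqrt_pos.
case: T hT a_ge0 => [// | n] hT a_ge0.
(* Markov: a trajectory missing the threshold has gain >= c ln vol V, while the
   expected gain is at most ln vol V - ln vol S0 <= ln vol V. *)
have missed_gain (s : n.+1.-tuple {set V}) :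
    ~~ [exists i : 'I_n.+1, Rleb (cond e (nth set0 s i)) (sqrt c * theta e n.+1)] ->
    c * ln (vol e [set: V]) <= traj_gain e s.
  by rewrite -(theta_threshold hT (Rlt_le _ _ hc) (Rlt_le _ _ L_gt0)); apply: traj_gain_miss.
have markov := markov_event (traj_weight_ge0 e S0 (n := n.+1)) (traj_gain_ge0 e (n := n.+1))
  cL_gt0 (traj_mass esym eirr hdeg n vol_S0_gt0) missed_gain.
have expected_gain := traj_potential esym eirr hdeg n vol_S0_gt0.
apply: Rle_ge; apply: Rle_trans markov; apply: Rplus_le_compat_l; apply: Ropp_le_contravar.
have -> : / c = ln (vol e [set: V]) / (c * ln (vol e [set: V])) by field; lra.
apply: Rmult_le_compat_r; first by apply: Rlt_le; apply: Rinv_0_lt_compat.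
by apply: Rle_trans expected_gain _; have := ln_ge0 vol_S0; lra.
Qed.
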